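(* Let $A$ and $B$ be finite-dimensional local $k$-algebras, $X$ a finite-dimensional $(A,B)$-bimodule on which $k$ acts centrally, and $\Lambda=\begin{pmatrix}A&X\\0&B\end{pmatrix}$, $P_1=[A\ X]$, $P_2=[0\ B]$. (a) $\Sigma(\Lambda)$ contains $\operatorname{cone}\{(0,-1),(1,-r)\}$ for $r:=t(X)_B=\dim_{B/J_B}(X/XJ_B)$. (b) $\Sigma(\Lambda)$ contains $\operatorname{cone}\{(1,0),(\ell,-1)\}$ for $\ell:=t_A(X)=\dim_{A/J_A}(X/J_AX)$. (c) Let $g_1,\dots,g_r$ be a minimal set of generators of the right $B$-module $X$ and $g:=[g_1\ \cdots\ g_r]\in M_{1,r}(X)$. Then $\mu_1^+(\Lambda[1])=P_g\oplus P_2[1]$, a basic 2-term silting complex. (d) Let $h_1,\dots,h_\ell$ be a minimal set of generators of the left $A$-module $X$ and $h:=(h_1,\dots,h_\ell)^{T}\in M_{\ell,1}(X)$. Then $\mu_2^-(\Lambda)=P_1\oplus P_h$, a basic 2-term silting complex.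
   Context: $k$ a field; $t(X)_B$ (resp. $t_A(X)$) is the minimal number of generators of $X$ as right $B$- (resp. left $A$-) module. For $x\in M_{s,t}(X)$ ($s\times t$ matrices over $X$), $P_x$ is the 2-term complex $P_2^{\oplus t}\xrightarrow{x(\cdot)}P_1^{\oplus s}$ in degrees $-1,0$. $g$-fan $\Sigma(\Lambda)$: set of cones $\operatorname{cone}\{[T_i]\}$ for basic 2-term presilting complexes $T=\bigoplus T_i$ (presilting: $\operatorname{Hom}(T,T[\ell])=0$ for $\ell>0$; $[T]=[T^0]-[T^{-1}]$), in $\mathbb{R}^2$ via $[P_1]\mapsto(1,0)$, $[P_2]\mapsto(0,1)$. A 2-term presilting complex with two non-isomorphic indecomposable summands is silting. For basic 2-term silting complexes, $T\ge U$ iff $\operatorname{Hom}(T,U[\ell])=0$ for $\ell>0$. For basic 2-term silting $T=T_1\oplus T_2$ the mutation at $T_i$ is the unique other basic 2-term silting complex $T'_i\oplus T_j$ ($j\ne i$, $T'_i\not\cong T_i$), denoted $\mu_i^+(T)$ if it is $>T$ and $\mu_i^-(T)$ if $<T$. For $\Lambda[1]=P_1[1]\oplus P_2[1]$ and $\Lambda=P_1\oplus P_2$ the index $i$ refers to the summand $P_i[1]$, resp. $P_i$. *)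

From HB Require Import structures.
From mathcomp Require Import all_boot all_order all_algebra all_field.
From mathcomp Require Import reals.
Set Implicit Arguments. Unset Strict Implicit. Unset Printing Implicit Defensive.
Import Order.TTheory GRing.Theory Num.Theory.
Local Open Scope ring_scope.

(* A local ring: the non-units are closed under addition (hence form the
   unique maximal ideal); 1 <> 0 holds in any falgType. *)
Definition local_alg (A : unitRingType) : Prop :=
  forall a b : A, a \isn't a GRing.unit -> b \isn't a GRing.unit ->
    (a + b) \isn't a GRing.unit.

Section Model.
Variables (k : fieldType) (A B : falgType k) (X : vectType k).
Variables (la : A -> X -> X) (ra : X -> B -> X).

(* X is an (A,B)-bimodule, finite dimensional over k (vectType), on which
   k acts centrally: the k-actions induced by A, by B and by the k-vector
   space structure all agree and commute with everything. *)
Definition bimodule : Prop :=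
  (forall x, la 1 x = x) /\
      (forall a a' x, la (a * a') x = la a (la a' x)) /\
      (forall a a' x, la (a + a') x = la a x + la a' x) /\
      (forall a x y, la a (x + y) = la a x + la a y) /\
      (forall (c : k) a x, la (c *: a) x = c *: la a x) /\
      (forall (c : k) a x, la a (c *: x) = c *: la a x) /\
      (forall x, ra x 1 = x) /\
      (forall x b b', ra x (b * b') = ra (ra x b) b') /\
      (forall x b b', ra x (b + b') = ra x b + ra x b') /\
      (forall x y b, ra (x + y) b = ra x b + ra y b) /\
      (forall (c : k) x b, ra x (c *: b) = c *: ra x b) /\
      (forall (c : k) x b, ra (c *: x) b = c *: ra x b) /\
      (forall a x b, ra (la a x) b = la a (ra x b)).

Definition gens_right r (g : 'M[X]_(1, r)) : Prop :=
  forall x : X, exists b : 'I_r -> B, x = \sum_(i < r) ra (g ord0 i) (b i).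
Definition gens_left l (h : 'M[X]_(l, 1)) : Prop :=
  forall x : X, exists a : 'I_l -> A, x = \sum_(i < l) la (a i) (h i ord0).

Definition is_tB (r : nat) : Prop :=
  (exists g : 'M[X]_(1, r), gens_right g) /\
  forall n (g : 'M[X]_(1, n)), gens_right g -> (r <= n)%N.
Definition is_tA (l : nat) : Prop :=
  (exists h : 'M[X]_(l, 1), gens_left h) /\
  forall n (h : 'M[X]_(n, 1)), gens_left h -> (l <= n)%N.

(* Morphisms P1^p (+) P2^q -> P1^p' (+) P2^q'.
   Hom(P1,P1) = A, Hom(P2,P1) = X, Hom(P1,P2) = 0, Hom(P2,P2) = B,
   acting by left multiplication; composition is multiplication in Lambda. *)
Record hom (p q p' q' : nat) := Hom {
  hA : 'M[A]_(p', p); hX : 'M[X]_(p', q); hB : 'M[B]_(q', q) }.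

Definition mxAX m n p (M : 'M[A]_(m, n)) (N : 'M[X]_(n, p)) : 'M[X]_(m, p) :=
  \matrix_(i, j) \sum_(l < n) la (M i l) (N l j).
Definition mxXB m n p (M : 'M[X]_(m, n)) (N : 'M[B]_(n, p)) : 'M[X]_(m, p) :=
  \matrix_(i, j) \sum_(l < n) ra (M i l) (N l j).

Definition hcomp p q p' q' p'' q'' (g : hom p' q' p'' q'') (f : hom p q p' q')
  : hom p q p'' q'' :=
  Hom (hA g *m hA f) (mxAX (hA g) (hX f) + mxXB (hX g) (hB f)) (hB g *m hB f).
Definition hadd p q p' q' (f g : hom p q p' q') : hom p q p' q' :=
  Hom (hA f + hA g) (hX f + hX g) (hB f + hB g).
Definition hsub p q p' q' (f g : hom p q p' q') : hom p q p' q' :=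
  Hom (hA f - hA g) (hX f - hX g) (hB f - hB g).
Definition hid p q : hom p q p q := Hom 1%:M 0 1%:M.

(* 2-term complex T^{-1} = P1^n1 (+) P2^n2 --d--> T^0 = P1^m1 (+) P2^m2 *)
Record cplx := Cplx { n1 : nat; n2 : nat; m1 : nat; m2 : nat;
                      dif : hom n1 n2 m1 m2 }.

Definition zero_cplx : cplx := @Cplx 0 0 0 0 (Hom 0 0 0).

Definition dsum (T U : cplx) : cplx :=
  @Cplx (n1 T + n1 U) (n2 T + n2 U) (m1 T + m1 U) (m2 T + m2 U)
    (Hom (block_mx (hA (dif T)) 0 0 (hA (dif U)))
         (block_mx (hX (dif T)) 0 0 (hX (dif U)))
         (block_mx (hB (dif T)) 0 0 (hB (dif U)))).

Definition big_dsum (s : seq cplx) : cplx := foldr dsum zero_cplx s.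

Definition chain_map (T U : cplx) (f1 : hom (n1 T) (n2 T) (n1 U) (n2 U))
  (f0 : hom (m1 T) (m2 T) (m1 U) (m2 U)) : Prop :=
  hcomp (dif U) f1 = hcomp f0 (dif T).

Definition null_htpc (T U : cplx) (f1 : hom (n1 T) (n2 T) (n1 U) (n2 U))
  (f0 : hom (m1 T) (m2 T) (m1 U) (m2 U)) : Prop :=
  exists h : hom (m1 T) (m2 T) (n1 U) (n2 U),
    f1 = hcomp h (dif T) /\ f0 = hcomp (dif U) h.

Definition iso (T U : cplx) : Prop :=
  exists f1 f0 g1 g0, chain_map f1 f0 /\ chain_map (T := U) (U := T) g1 g0 /\
    null_htpc (hsub (hcomp g1 f1) (hid _ _)) (hsub (hcomp g0 f0) (hid _ _)) /\
    null_htpc (hsub (hcomp f1 g1) (hid _ _)) (hsub (hcomp f0 g0) (hid _ _)).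

Definition indec (T : cplx) : Prop :=
  ~ iso T zero_cplx /\
  forall T' T'', iso T (dsum T' T'') -> iso T' zero_cplx \/ iso T'' zero_cplx.

(* Hom(T, U[1]) = 0 in the homotopy category; Hom(T, U[l]) = 0 for l >= 2
   holds automatically for 2-term complexes. *)
Definition hom_shift_vanish (T U : cplx) : Prop :=
  forall phi : hom (n1 T) (n2 T) (m1 U) (m2 U),
    exists (h0 : hom (m1 T) (m2 T) (m1 U) (m2 U))
           (h1 : hom (n1 T) (n2 T) (n1 U) (n2 U)),
      phi = hadd (hcomp h0 (dif T)) (hcomp (dif U) h1).

Definition presilting (T : cplx) : Prop := hom_shift_vanish T T.

(* basic 2-term silting complex T1 (+) T2 with two non-isomorphic
   indecomposable summands (presilting with 2 summands = silting) *)
Definition basic_silting2 (T1 T2 : cplx) : Prop :=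
  [/\ indec T1, indec T2, ~ iso T1 T2 & presilting (dsum T1 T2)].

Definition silt_geq (T U : cplx) : Prop := hom_shift_vanish T U.
Definition silt_gt (T U : cplx) : Prop := silt_geq T U /\ ~ iso T U.

Definition mutation_at (i : nat) (T1 T2 U1 U2 : cplx) : Prop :=
  basic_silting2 U1 U2 /\
  (if i == 1%N then U2 = T2 /\ ~ iso U1 T1 else U1 = T1 /\ ~ iso U2 T2).
Definition mu_plus i T1 T2 U1 U2 : Prop :=
  mutation_at i T1 T2 U1 U2 /\ silt_gt (dsum U1 U2) (dsum T1 T2).
Definition mu_minus i T1 T2 U1 U2 : Prop :=
  mutation_at i T1 T2 U1 U2 /\ silt_gt (dsum T1 T2) (dsum U1 U2).

Definition P1c : cplx := @Cplx 0 0 1 0 (Hom 0 0 0).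
Definition P2c : cplx := @Cplx 0 0 0 1 (Hom 0 0 0).
Definition P1sh : cplx := @Cplx 1 0 0 0 (Hom 0 0 0).
Definition P2sh : cplx := @Cplx 0 1 0 0 (Hom 0 0 0).
Definition Px s t (x : 'M[X]_(s, t)) : cplx := @Cplx 0 t s 0 (Hom 0 x 0).

Variable R : realType.
Definition gvec (T : cplx) : R * R :=
  ((m1 T)%:R - (n1 T)%:R, (m2 T)%:R - (n2 T)%:R).

End Model.

Definition cone (R : realType) (vs : seq (R * R)) : R * R -> Prop :=
  fun p => exists lam : 'I_(size vs) -> R, (forall i, 0 <= lam i) /\
    p = (\sum_(i < size vs) lam i * (nth (0, 0) vs i).1,
         \sum_(i < size vs) lam i * (nth (0, 0) vs i).2).

Definition gfan_contains (R : realType) (k : fieldType) (A B : falgType k)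
  (X : vectType k) (la : A -> X -> X) (ra : X -> B -> X)
  (C : R * R -> Prop) : Prop :=
  exists s : seq (cplx A B X),
    (forall i : 'I_(size s), indec la ra (nth (zero_cplx A B X) s i)) /\
    (forall i j : 'I_(size s), i != j ->
       ~ iso la ra (nth (zero_cplx A B X) s i) (nth (zero_cplx A B X) s j)) /\
    presilting la ra (big_dsum s) /\
    (forall p, C p <-> cone (map (gvec R) s) p).

From Pilot Require Import Defs.
From HB Require Import structures.
From mathcomp Require Import all_boot all_order all_algebra all_field.
From mathcomp Require Import reals.
Set Implicit Arguments. Unset Strict Implicit. Unset Printing Implicit Defensive.
Import Order.TTheory GRing.Theory Num.Theory.
Local Open Scope ring_scope.

(* Apart from P1[1], which only enters through comparisons, every complex in
   the statement is some P_x : P2^t --x--> P1^s with x in M_{s,t}(X), P1 and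
   P2[1] being the cases of the empty 1 x 0 and 0 x 1 matrices.  As
   Hom(P1, P2) = 0 there are no homotopies, so End(P_x) in the homotopy
   category consists of the pairs (a, b) in M_s(A) x M_t(B) with x b = a x.
   For a minimal generating row g an idempotent pair has a in {0, 1}, A being
   local, and then g c = 0 for the idempotent c = b, resp. 1 - b.  A unit
   entry of c would make one generator redundant, and an idempotent matrix
   with non-unit entries over a local ring vanishes; hence 0 and 1 are the
   only idempotents of End(P_g), which makes P_g indecomposable, since a
   decomposition T ~ T1 (+) T2 turns the projection onto T1 into an
   idempotent of End(T).  P_g (+) P2[1] is presilting because a morphism
   P2^(r+1) -> P1, i.e. a row in X^(r+1), is null-homotopic as soon as it
   lies in g M_{r,r+1}(B).  The summands are told apart by the multiplicity
   of P1 in degree 0, and the comparisons with Lambda[1] and Lambda hold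
   because Hom(T, U[1]) = 0 whenever U is concentrated in degree -1 or T in
   degree 0.  Parts (b) and (d) are dual, with P_h. *)

Section AdditiveMorphism.
Variables (U V : zmodType) (f : U -> V).
Hypothesis fD : {morph f : x y / x + y}.

Lemma addmorph0 : f 0 = 0.
Proof. by apply: (addrI (f 0)); rewrite -fD !addr0. Qed.

Lemma addmorphN x : f (- x) = - f x.
Proof. by apply/eqP; rewrite -subr_eq0 opprK -fD addNr addmorph0. Qed.

Lemma addmorphB x y : f (x - y) = f x - f y.
Proof. by rewrite fD addmorphN. Qed.

End AdditiveMorphism.

Lemma flatmx_eq (R : Type) n (M N : 'M[R]_(0, n)) : M = N.
Proof. by apply/matrixP => -[]. Qed.
Lemma thinmx_eq (R : Type) m (M N : 'M[R]_(m, 0)) : M = N.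
Proof. by apply/matrixP => ? -[]. Qed.

Lemma scalar1_mx_eq0 (R : nzRingType) n : (1%:M : 'M[R]_n) = 0 -> n = 0%N.
Proof. by case: n => // n /matrixP /(_ 0 0); rewrite !mxE => /eqP; rewrite oner_eq0. Qed.

Lemma id_factor_through0 (R : nzRingType) m p q (a : 'M[R]_(m, p)) (b : 'M_(p, m))
    (c : 'M_(m, q)) (d : 'M_(q, m)) :
  p = 0%N -> q = 0%N -> a *m b - 1%:M = c *m d -> m = 0%N.
Proof.
move=> p0 q0; subst p q; rewrite (thinmx0 a) (thinmx0 c) !mul0mx sub0r.
by move/eqP; rewrite oppr_eq0 => /eqP/scalar1_mx_eq0.
Qed.

Lemma idempotent_1sub (R : pzRingType) n (c : 'M[R]_n) : c *m c = c ->
  (1%:M - c) *m (1%:M - c) = 1%:M - c.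
Proof. by move=> cc; rewrite mulmxBl mul1mx mulmxBr mulmx1 cc subrr subr0. Qed.

(** * Local algebras *)

Section LocalAlgebra.
Variables (k : fieldType) (R : falgType k).

Lemma falg_unit_l (x y : R) : y * x = 1 -> x \is a GRing.unit.
Proof.
move=> yx; have inj : lker (amull x) == 0%VS.
  by apply/lker0P => v w; rewrite !lfunE /= => e; rewrite -[v]mul1r -[w]mul1r -yx -!mulrA e.
pose z := (amull x)^-1%VF 1.
have xz : x * z = 1 by have := lker0_lfunVK inj 1; rewrite lfunE.
have yz : y = z by rewrite -[y]mulr1 -xz mulrA yx mul1r.
by apply/unitrP; exists y; rewrite {2}yz.
Qed.

Hypothesis locR : local_alg R.

Lemma nonunit_mull (a b : R) : a \isn't a GRing.unit -> b * a \isn't a GRing.unit.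
Proof.
apply: contra => /unitrP[c [cba _]]; apply: (@falg_unit_l _ (c * b)).
by rewrite -mulrA.
Qed.

Lemma unit_1sub (a : R) : a \isn't a GRing.unit -> 1 - a \is a GRing.unit.
Proof.
move=> Na; apply/negPn/negP => N1a; have := locR Na N1a.
by rewrite addrC subrK unitr1.
Qed.

Lemma idempotent01 (a : R) : a * a = a -> a = 0 \/ a = 1.
Proof.
move=> aa; have [Ua | Na] := boolP (a \is a GRing.unit).
  by right; apply: (mulrI Ua); rewrite aa mulr1.
by left; apply: (mulrI (unit_1sub Na)); rewrite mulrBl mul1r aa subrr mulr0.
Qed.

Lemma nonunit_fixed_row0 n (c : 'I_n -> 'I_n -> R) (x : 'I_n -> R) :
  (forall i j, c i j \isn't a GRing.unit) ->
  (forall j, x j = \sum_i x i * c i j) -> forall j, x j = 0.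
Proof.
elim: n c x => [|n IH] c x Nc xc j; first by case: j.
set u := (1 - c ord0 ord0)^-1.
have Uu : 1 - c ord0 ord0 \is a GRing.unit by apply: unit_1sub.
(* solve the 0th equation for [x 0] and substitute it into the others *)
have x0 : x ord0 = \sum_(i < n) x (lift ord0 i) * (c (lift ord0 i) ord0 * u).
  have e : x ord0 * (1 - c ord0 ord0) = \sum_(i < n) x (lift ord0 i) * c (lift ord0 i) ord0.
    by rewrite mulrBr mulr1 {1}xc big_ord_recl addrAC subrr add0r.
  rewrite -[x ord0]mulr1 -(divrr Uu) mulrA e mulr_suml.
  by apply: eq_bigr => i _; rewrite mulrA.
pose c' i l := c (lift ord0 i) ord0 * u * c ord0 (lift ord0 l) + c (lift ord0 i) (lift ord0 l).
have Nc' i l : c' i l \isn't a GRing.unit by apply: locR; [apply: nonunit_mull | apply: Nc].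
have xc' j' : x (lift ord0 j') = \sum_i x (lift ord0 i) * c' i j'.
  rewrite xc big_ord_recl x0 mulr_suml -big_split /=.
  by apply: eq_bigr => i _; rewrite /c' mulrDr !mulrA.
have x'0 := IH c' (fun i => x (lift ord0 i)) Nc' xc'.
have [j' -> | ->] := unliftP ord0 j; first exact: x'0.
by rewrite x0 big1 // => i _; rewrite x'0 mul0r.
Qed.

Lemma nonunit_idempotent_mx0 n (c : 'M[R]_n) :
  (forall i j, c i j \isn't a GRing.unit) -> c *m c = c -> c = 0.
Proof.
move=> Nc cc; apply/matrixP => i j; rewrite mxE.
by apply: (nonunit_fixed_row0 Nc) => j'; rewrite -{1}cc mxE.
Qed.

Lemma idempotent_mx1 (M : 'M[R]_1) : M *m M = M -> M = 0 \/ M = 1%:M.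
Proof.
move=> /matrixP /(_ 0 0); rewrite mxE big_ord1 => /idempotent01[] M00;
  [left | right]; apply/matrixP => i j; by rewrite !ord1 !mxE M00.
Qed.

End LocalAlgebra.

(** * Matrix actions of A and B on X *)

Section TwoTermComplexes.
Variables (k : fieldType) (A B : falgType k) (X : vectType k).
Variables (la : A -> X -> X) (ra : X -> B -> X).
Hypothesis bimodX : bimodule la ra.

Ltac bimodule_axiom :=
  move: bimodX => [? [? [? [? [? [? [? [? [? [? [? [? ?]]]]]]]]]]]].

Lemma la1 x : la 1 x = x. Proof. by bimodule_axiom. Qed.
Lemma laM a a' x : la (a * a') x = la a (la a' x). Proof. by bimodule_axiom. Qed.
Lemma laDl x : {morph la^~ x : a a' / a + a'}. Proof. by bimodule_axiom. Qed.
Lemma laDr a : {morph la a : x y / x + y}. Proof. by bimodule_axiom. Qed.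
Lemma ra1 x : ra x 1 = x. Proof. by bimodule_axiom. Qed.
Lemma raM x b b' : ra x (b * b') = ra (ra x b) b'. Proof. by bimodule_axiom. Qed.
Lemma raDl b : {morph ra^~ b : x y / x + y}. Proof. by bimodule_axiom. Qed.
Lemma raDr x : {morph ra x : b b' / b + b'}. Proof. by bimodule_axiom. Qed.
Lemma la_ra a x b : la a (ra x b) = ra (la a x) b. Proof. by bimodule_axiom. Qed.

Lemma la0l x : la 0 x = 0. Proof. exact: addmorph0 (laDl x). Qed.
Lemma la0r a : la a 0 = 0. Proof. exact: addmorph0 (laDr a). Qed.
Lemma ra0l b : ra 0 b = 0. Proof. exact: addmorph0 (raDl b). Qed.
Lemma ra0r x : ra x 0 = 0. Proof. exact: addmorph0 (raDr x). Qed.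

Lemma la_suml x I (r : seq I) (P : pred I) (F : I -> A) :
  la (\sum_(i <- r | P i) F i) x = \sum_(i <- r | P i) la (F i) x.
Proof. exact: (big_morph _ (laDl x) (la0l x)). Qed.
Lemma la_sumr a I (r : seq I) (P : pred I) (F : I -> X) :
  la a (\sum_(i <- r | P i) F i) = \sum_(i <- r | P i) la a (F i).
Proof. exact: (big_morph _ (laDr a) (la0r a)). Qed.
Lemma ra_suml b I (r : seq I) (P : pred I) (F : I -> X) :
  ra (\sum_(i <- r | P i) F i) b = \sum_(i <- r | P i) ra (F i) b.
Proof. exact: (big_morph _ (raDl b) (ra0l b)). Qed.
Lemma ra_sumr x I (r : seq I) (P : pred I) (F : I -> B) :
  ra x (\sum_(i <- r | P i) F i) = \sum_(i <- r | P i) ra x (F i).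
Proof. exact: (big_morph _ (raDr x) (ra0r x)). Qed.

Local Notation AX := (mxAX la).
Local Notation XB := (mxXB ra).

Lemma mxAXDl m n p (N : 'M[X]_(n, p)) :
  {morph (fun M : 'M[A]_(m, n) => AX M N) : M M' / M + M'}.
Proof.
move=> M M'; apply/matrixP => i j; rewrite !mxE -big_split.
by apply: eq_bigr => l _; rewrite mxE laDl.
Qed.
Lemma mxAXDr m n p (M : 'M[A]_(m, n)) :
  {morph (fun N : 'M[X]_(n, p) => AX M N) : N N' / N + N'}.
Proof.
move=> N N'; apply/matrixP => i j; rewrite !mxE -big_split.
by apply: eq_bigr => l _; rewrite mxE laDr.
Qed.
Lemma mxXBDl m n p (N : 'M[B]_(n, p)) :
  {morph (fun M : 'M[X]_(m, n) => XB M N) : M M' / M + M'}.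
Proof.
move=> M M'; apply/matrixP => i j; rewrite !mxE -big_split.
by apply: eq_bigr => l _; rewrite mxE raDl.
Qed.
Lemma mxXBDr m n p (M : 'M[X]_(m, n)) :
  {morph (fun N : 'M[B]_(n, p) => XB M N) : N N' / N + N'}.
Proof.
move=> N N'; apply/matrixP => i j; rewrite !mxE -big_split.
by apply: eq_bigr => l _; rewrite mxE raDr.
Qed.

Lemma mx0AX m n p (N : 'M[X]_(n, p)) : AX (0 : 'M_(m, n)) N = 0.
Proof. exact: (addmorph0 (@mxAXDl m n p N)). Qed.
Lemma mxAX0 m n p (M : 'M[A]_(m, n)) : AX M (0 : 'M_(n, p)) = 0.
Proof. exact: (addmorph0 (@mxAXDr m n p M)). Qed.
Lemma mx0XB m n p (N : 'M[B]_(n, p)) : XB (0 : 'M_(m, n)) N = 0.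
Proof. exact: (addmorph0 (@mxXBDl m n p N)). Qed.
Lemma mxXB0 m n p (M : 'M[X]_(m, n)) : XB M (0 : 'M_(n, p)) = 0.
Proof. exact: (addmorph0 (@mxXBDr m n p M)). Qed.

Lemma mx1AX n p (N : 'M[X]_(n, p)) : AX 1%:M N = N.
Proof.
apply/matrixP => i j; rewrite !mxE (bigD1 i) //= big1 ?addr0 => [|l /negbTE].
  by rewrite mxE eqxx la1.
by rewrite mxE eq_sym => ->; rewrite la0l.
Qed.
Lemma mxXB1 m n (N : 'M[X]_(m, n)) : XB N 1%:M = N.
Proof.
apply/matrixP => i j; rewrite !mxE (bigD1 j) //= big1 ?addr0 => [|l /negbTE].
  by rewrite mxE eqxx ra1.
by rewrite mxE => ->; rewrite ra0r.
Qed.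

Lemma mxAX_mul m n p q (M : 'M[A]_(m, n)) (M' : 'M[A]_(n, p)) (N : 'M[X]_(p, q)) :
  AX (M *m M') N = AX M (AX M' N).
Proof.
apply/matrixP => i j; rewrite !mxE; under eq_bigr do rewrite mxE la_suml.
rewrite exchange_big; apply: eq_bigr => l _; rewrite mxE la_sumr.
by apply: eq_bigr => t _; rewrite laM.
Qed.
Lemma mxXB_mul m n p q (N : 'M[X]_(m, n)) (M : 'M[B]_(n, p)) (M' : 'M[B]_(p, q)) :
  XB N (M *m M') = XB (XB N M) M'.
Proof.
apply/matrixP => i j; rewrite !mxE; under eq_bigr do rewrite mxE ra_sumr.
rewrite exchange_big; apply: eq_bigr => l _; rewrite mxE ra_suml.
by apply: eq_bigr => t _; rewrite raM.
Qed.
Lemma mxAXB m n p q (M : 'M[A]_(m, n)) (N : 'M[X]_(n, p)) (P : 'M[B]_(p, q)) :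
  AX M (XB N P) = XB (AX M N) P.
Proof.
apply/matrixP => i j; rewrite !mxE; under eq_bigr do rewrite mxE la_sumr.
rewrite exchange_big; apply: eq_bigr => l _; rewrite mxE ra_suml.
by apply: eq_bigr => t _; rewrite la_ra.
Qed.

Lemma mxAX_col m1 m2 n p (M1 : 'M[A]_(m1, n)) (M2 : 'M[A]_(m2, n)) (N : 'M[X]_(n, p)) :
  AX (col_mx M1 M2) N = col_mx (AX M1 N) (AX M2 N).
Proof.
apply/matrixP => i j; rewrite -(splitK i); case: (split i) => i'.
  by rewrite col_mxEu !mxE; apply: eq_bigr => l _; rewrite col_mxEu.
by rewrite col_mxEd !mxE; apply: eq_bigr => l _; rewrite col_mxEd.
Qed.
Lemma mxXB_row m n p1 p2 (N : 'M[X]_(m, n)) (M1 : 'M[B]_(n, p1)) (M2 : 'M[B]_(n, p2)) :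
  XB N (row_mx M1 M2) = row_mx (XB N M1) (XB N M2).
Proof.
apply/matrixP => i j; rewrite -(splitK j); case: (split j) => j'.
  by rewrite row_mxEl !mxE; apply: eq_bigr => l _; rewrite row_mxEl.
by rewrite row_mxEr !mxE; apply: eq_bigr => l _; rewrite row_mxEr.
Qed.
Lemma mxAX_row_block m n1 n2 p1 p2 (M1 : 'M[A]_(m, n1)) (M2 : 'M[A]_(m, n2))
    (N1 : 'M[X]_(n1, p1)) (N2 : 'M[X]_(n1, p2)) (N3 : 'M[X]_(n2, p1)) (N4 : 'M[X]_(n2, p2)) :
  AX (row_mx M1 M2) (block_mx N1 N2 N3 N4) =
  row_mx (AX M1 N1 + AX M2 N3) (AX M1 N2 + AX M2 N4).
Proof.
apply/matrixP => i j; rewrite -(splitK j) [LHS]mxE big_split_ord.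
case: (split j) => j' /=; rewrite ?row_mxEl ?row_mxEr !mxE.
  by congr (_ + _); apply: eq_bigr => l _; rewrite ?row_mxEl ?row_mxEr ?block_mxEul ?block_mxEdl.
by congr (_ + _); apply: eq_bigr => l _; rewrite ?row_mxEl ?row_mxEr ?block_mxEur ?block_mxEdr.
Qed.
Lemma mxXB_block_col m1 m2 n1 n2 p (N1 : 'M[X]_(m1, n1)) (N2 : 'M[X]_(m1, n2))
    (N3 : 'M[X]_(m2, n1)) (N4 : 'M[X]_(m2, n2)) (M1 : 'M[B]_(n1, p)) (M2 : 'M[B]_(n2, p)) :
  XB (block_mx N1 N2 N3 N4) (col_mx M1 M2) =
  col_mx (XB N1 M1 + XB N2 M2) (XB N3 M1 + XB N4 M2).
Proof.
apply/matrixP => i j; rewrite -(splitK i) [LHS]mxE big_split_ord.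
case: (split i) => i' /=; rewrite ?col_mxEu ?col_mxEd !mxE.
  by congr (_ + _); apply: eq_bigr => l _; rewrite ?block_mxEul ?block_mxEur ?col_mxEu ?col_mxEd.
by congr (_ + _); apply: eq_bigr => l _; rewrite ?block_mxEdl ?block_mxEdr ?col_mxEu ?col_mxEd.
Qed.

(** * Chain maps and homotopies *)

Local Notation hom := (Defs.hom A B X).
Local Notation cplx := (Defs.cplx A B X).
Local Notation hcomp := (hcomp la ra).

Lemma hom_eq p q p' q' (f g : hom p q p' q') :
  hA f = hA g -> hX f = hX g -> hB f = hB g -> f = g.
Proof. by case: f g => ? ? ? [? ? ?] /= -> -> ->. Qed.

Definition hzero p q p' q' : hom p q p' q' := Defs.Hom 0 0 0.
Arguments hzero {p q p' q'}.

Lemma hcompA p q p1 q1 p2 q2 p3 q3 (h : hom p2 q2 p3 q3) (g : hom p1 q1 p2 q2)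
    (f : hom p q p1 q1) :
  hcomp h (hcomp g f) = hcomp (hcomp h g) f.
Proof.
apply: hom_eq; rewrite /= ?mulmxA //.
by rewrite mxAXDr mxXBDl mxAX_mul mxXB_mul mxAXB addrA.
Qed.
Lemma hid_comp p q p' q' (f : hom p q p' q') : hcomp (hid A B X p' q') f = f.
Proof. by apply: hom_eq; rewrite /= ?mul1mx // mx1AX mx0XB addr0. Qed.
Lemma hcomp_id p q p' q' (f : hom p q p' q') : hcomp f (hid A B X p q) = f.
Proof. by apply: hom_eq; rewrite /= ?mulmx1 // mxAX0 mxXB1 add0r. Qed.
Lemma hzero_comp p q p1 q1 p2 q2 (f : hom p q p1 q1) :
  hcomp (@hzero p1 q1 p2 q2) f = hzero.
Proof. by apply: hom_eq; rewrite /= ?mul0mx // mx0AX mx0XB addr0. Qed.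
Lemma hcomp_zero p q p1 q1 p2 q2 (f : hom p1 q1 p2 q2) :
  hcomp f (@hzero p q p1 q1) = hzero.
Proof. by apply: hom_eq; rewrite /= ?mulmx0 // mxAX0 mxXB0 addr0. Qed.
Lemma hcompBl p q p1 q1 p2 q2 (g g' : hom p1 q1 p2 q2) (f : hom p q p1 q1) :
  hcomp (hsub g g') f = hsub (hcomp g f) (hcomp g' f).
Proof.
apply: hom_eq; rewrite /= ?mulmxBl //.
by rewrite (addmorphB (mxAXDl _)) (addmorphB (mxXBDl _)) opprD addrACA.
Qed.
Lemma hcompBr p q p1 q1 p2 q2 (g : hom p1 q1 p2 q2) (f f' : hom p q p1 q1) :
  hcomp g (hsub f f') = hsub (hcomp g f) (hcomp g f').
Proof.
apply: hom_eq; rewrite /= ?mulmxBr //.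
by rewrite (addmorphB (mxAXDr _)) (addmorphB (mxXBDr _)) opprD addrACA.
Qed.

Definition cmor (T U : cplx) :=
  (hom (n1 T) (n2 T) (n1 U) (n2 U) * hom (m1 T) (m2 T) (m1 U) (m2 U))%type.

Definition ccomp T U V (G : cmor U V) (F : cmor T U) : cmor T V :=
  (hcomp G.1 F.1, hcomp G.2 F.2).
Definition csub T U (F G : cmor T U) : cmor T U := (hsub F.1 G.1, hsub F.2 G.2).
Definition cid T : cmor T T := (hid A B X _ _, hid A B X _ _).
Definition czero T U : cmor T U := (hzero, hzero).

Definition is_chain T U (F : cmor T U) := chain_map la ra F.1 F.2.
Definition nullhtp T U (F : cmor T U) := null_htpc la ra F.1 F.2.
Definition homotopic T U (F G : cmor T U) := nullhtp (csub F G).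

Lemma ccompA T U V W (H : cmor V W) (G : cmor U V) (F : cmor T U) :
  ccomp H (ccomp G F) = ccomp (ccomp H G) F.
Proof. by rewrite /ccomp /= !hcompA. Qed.
Lemma cid_comp T U (F : cmor T U) : ccomp (cid U) F = F.
Proof. by case: F => ? ?; rewrite /ccomp /= !hid_comp. Qed.
Lemma ccomp_id T U (F : cmor T U) : ccomp F (cid T) = F.
Proof. by case: F => ? ?; rewrite /ccomp /= !hcomp_id. Qed.
Lemma czero_comp T U V (F : cmor T U) : ccomp (czero U V) F = czero T V.
Proof. by rewrite /ccomp /= !hzero_comp. Qed.
Lemma ccomp_zero T U V (F : cmor U V) : ccomp F (czero T U) = czero T V.
Proof. by rewrite /ccomp /= !hcomp_zero. Qed.
Lemma ccompBl T U V (G G' : cmor U V) (F : cmor T U) :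
  ccomp (csub G G') F = csub (ccomp G F) (ccomp G' F).
Proof. by rewrite /ccomp /= !hcompBl. Qed.
Lemma ccompBr T U V (G : cmor U V) (F F' : cmor T U) :
  ccomp G (csub F F') = csub (ccomp G F) (ccomp G F').
Proof. by rewrite /ccomp /= !hcompBr. Qed.
Lemma csubr0 T U (F : cmor T U) : csub F (czero T U) = F.
Proof. by case: F => f1 f0; congr pair; apply: hom_eq; rewrite /= subr0. Qed.
Lemma csubrr T U (F : cmor T U) : csub F F = czero T U.
Proof. by congr pair; apply: hom_eq; rewrite /= subrr. Qed.

Lemma is_chain_comp T U V (G : cmor U V) (F : cmor T U) :
  is_chain G -> is_chain F -> is_chain (ccomp G F).
Proof. by rewrite /is_chain /chain_map /= => eG eF; rewrite hcompA eG -hcompA eF hcompA. Qed.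
Lemma is_chain_id T : is_chain (cid T).
Proof. by rewrite /is_chain /chain_map /= hid_comp hcomp_id. Qed.
Lemma is_chain0 T U : is_chain (czero T U).
Proof. by rewrite /is_chain /chain_map /= hzero_comp hcomp_zero. Qed.
Lemma nullhtp0 T U : nullhtp (czero T U).
Proof. by exists hzero; rewrite hzero_comp hcomp_zero. Qed.
Lemma nullhtp_sub T U (F G : cmor T U) : nullhtp F -> nullhtp G -> nullhtp (csub F G).
Proof.
case: F G => [f1 f0] [g1 g0] [h /= [-> ->]] [h' /= [-> ->]].
by exists (hsub h h'); rewrite hcompBl hcompBr.
Qed.
Lemma nullhtp_compl T U V (G : cmor U V) (F : cmor T U) :
  is_chain G -> nullhtp F -> nullhtp (ccomp G F).
Proof.
rewrite /is_chain /chain_map => eG [h [e1 e0]]; exists (hcomp G.1 h).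
by rewrite /ccomp /= e1 e0 !hcompA eG.
Qed.
Lemma nullhtp_compr T U V (G : cmor U V) (F : cmor T U) :
  is_chain F -> nullhtp G -> nullhtp (ccomp G F).
Proof.
rewrite /is_chain /chain_map => eF [h [e1 e0]]; exists (hcomp h F.2).
by rewrite /ccomp /= e1 e0 -!hcompA eF.
Qed.

Lemma homotopic_refl T U (F : cmor T U) : homotopic F F.
Proof. by rewrite /homotopic csubrr; apply: nullhtp0. Qed.
Lemma homotopic_sym T U (F G : cmor T U) : homotopic F G -> homotopic G F.
Proof.
move=> /(nullhtp_sub (nullhtp0 T U)); congr nullhtp.
by congr pair; apply: hom_eq; rewrite /= sub0r opprB.
Qed.
Lemma homotopic_trans T U (F G H : cmor T U) :
  homotopic F G -> homotopic G H -> homotopic F H.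
Proof.
move=> FG /homotopic_sym HG; have := nullhtp_sub FG HG; congr nullhtp.
by congr pair; apply: hom_eq; rewrite /= opprB addrA subrK.
Qed.
Lemma homotopic_sub T U (F F' G G' : cmor T U) :
  homotopic F F' -> homotopic G G' -> homotopic (csub F G) (csub F' G').
Proof.
move=> FF' GG'; have := nullhtp_sub FF' GG'; congr nullhtp.
by congr pair; apply: hom_eq; rewrite /= !opprD !opprK addrACA.
Qed.
Lemma homotopic_comp T U V (G G' : cmor U V) (F F' : cmor T U) :
  is_chain G' -> is_chain F -> homotopic G G' -> homotopic F F' ->
  homotopic (ccomp G F) (ccomp G' F').
Proof.
move=> cG' cF GG' FF'; apply: (@homotopic_trans _ _ _ (ccomp G' F)).
  by rewrite /homotopic -ccompBl; apply: nullhtp_compr.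
by rewrite /homotopic -ccompBr; apply: nullhtp_compl.
Qed.

Section DirectSum.
Variables T1 T2 : cplx.
Local Notation S := (dsum T1 T2).

Definition dsum_inl : cmor T1 S :=
  (Defs.Hom (col_mx 1%:M 0) 0 (col_mx 1%:M 0), Defs.Hom (col_mx 1%:M 0) 0 (col_mx 1%:M 0)).
Definition dsum_inr : cmor T2 S :=
  (Defs.Hom (col_mx 0 1%:M) 0 (col_mx 0 1%:M), Defs.Hom (col_mx 0 1%:M) 0 (col_mx 0 1%:M)).
Definition dsum_fst : cmor S T1 :=
  (Defs.Hom (row_mx 1%:M 0) 0 (row_mx 1%:M 0), Defs.Hom (row_mx 1%:M 0) 0 (row_mx 1%:M 0)).
Definition dsum_snd : cmor S T2 :=
  (Defs.Hom (row_mx 0 1%:M) 0 (row_mx 0 1%:M), Defs.Hom (row_mx 0 1%:M) 0 (row_mx 0 1%:M)).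

Lemma is_chain_dsum :
  [/\ is_chain dsum_inl, is_chain dsum_inr, is_chain dsum_fst & is_chain dsum_snd].
Proof.
by split; apply: hom_eq; rewrite /= ?mul_block_col ?mul_col_mx ?mul_mx_row ?mul_row_block
  ?mxXB_block_col ?mxAX_col ?mxXB_row ?mxAX_row_block ?mxAX0 ?mxXB0 ?mx0AX ?mx0XB
  ?mx1AX ?mxXB1 ?mulmx1 ?mul1mx ?mulmx0 ?mul0mx ?col_mx0 ?row_mx0 ?addr0 ?add0r.
Qed.

Lemma dsum_fst_inl : ccomp dsum_fst dsum_inl = cid T1.
Proof.
by congr pair; apply: hom_eq;
  rewrite /= ?mul_row_col ?mxAX0 ?mx0XB ?mulmx1 ?mulmx0 ?addr0.
Qed.
Lemma dsum_snd_inr : ccomp dsum_snd dsum_inr = cid T2.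
Proof.
by congr pair; apply: hom_eq;
  rewrite /= ?mul_row_col ?mxAX0 ?mx0XB ?mulmx1 ?mulmx0 ?add0r ?addr0.
Qed.
Lemma dsum_inr_snd : ccomp dsum_inr dsum_snd = csub (cid S) (ccomp dsum_inl dsum_fst).
Proof.
by congr pair; apply: hom_eq; rewrite /= ?mxAX0 ?mx0XB ?addr0 ?subr0 // !mul_col_row
  !mulmx1 !mulmx0 scalar_mx_block opp_block_mx add_block_mx subrr !subr0 ?oppr0 ?addr0.
Qed.

End DirectSum.

Lemma nullhtp_id_of_retract T S T' (F : cmor T S) (G : cmor S T)
    (i : cmor T' S) (p : cmor S T') :
  is_chain F -> is_chain G -> is_chain i -> is_chain p ->
  homotopic (ccomp F G) (cid S) -> ccomp p i = cid T' ->
  homotopic (ccomp G (ccomp (ccomp i p) F)) (czero T T) -> nullhtp (cid T').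
Proof.
move=> cF cG ci cp FG pi GEF.
have cGi := is_chain_comp cG ci.
have cpPi : is_chain (ccomp p (ccomp (ccomp F G) i)).
  by apply: is_chain_comp cp (is_chain_comp (is_chain_comp cF cG) ci).
have pPi : homotopic (ccomp p (ccomp (ccomp F G) i)) (cid T').
  have -> : cid T' = ccomp p (ccomp (cid S) i) by rewrite cid_comp pi.
  apply: homotopic_comp cp (is_chain_comp (is_chain_comp cF cG) ci) (homotopic_refl p) _.
  exact: homotopic_comp (is_chain_id S) ci FG (homotopic_refl i).
suff : homotopic (cid T') (czero T' T') by rewrite /homotopic csubr0.
apply: (@homotopic_trans _ _ _ (ccomp (ccomp p (ccomp (ccomp F G) i))
                                     (ccomp p (ccomp (ccomp F G) i)))).
  rewrite -[X in homotopic X _](cid_comp (cid T')).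
  exact: homotopic_comp cpPi (is_chain_id _) (homotopic_sym pPi) (homotopic_sym pPi).
have -> : czero T' T' = ccomp (ccomp p F) (ccomp (czero T T) (ccomp G i)).
  by rewrite czero_comp ccomp_zero.
have -> : ccomp (ccomp p (ccomp (ccomp F G) i)) (ccomp p (ccomp (ccomp F G) i)) =
          ccomp (ccomp p F) (ccomp (ccomp G (ccomp (ccomp i p) F)) (ccomp G i)).
  by rewrite !ccompA.
apply: homotopic_comp (is_chain_comp cp cF) _ (homotopic_refl _) _.
  by apply: is_chain_comp cGi; apply: is_chain_comp cG (is_chain_comp (is_chain_comp ci cp) cF).
exact: homotopic_comp (is_chain0 _ _) cGi GEF (homotopic_refl _).
Qed.

Lemma hom_to0 p q (f : hom p q 0 0) : f = hzero.
Proof. by case: f => fA fX fB; rewrite (flatmx0 fA) (flatmx0 fX) (flatmx0 fB). Qed.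
Lemma hom_from0 p q (f : hom 0 0 p q) : f = hzero.
Proof. by case: f => fA fX fB; rewrite (thinmx0 fA) (thinmx0 fX) (thinmx0 fB). Qed.
Lemma hsub_eq0 p q p' q' (f g : hom p q p' q') : hsub f g = hzero -> f = g.
Proof. by case: f g => ? ? ? [? ? ?] [] /subr0_eq -> /subr0_eq -> /subr0_eq ->. Qed.
Lemma hsub0K p q p' q' (f : hom p q p' q') : hsub hzero (hsub hzero f) = f.
Proof. by apply: hom_eq; rewrite /= !sub0r opprK. Qed.

Lemma nullhtp_id_iso0 T : nullhtp (cid T) <-> iso la ra T (zero_cplx A B X).
Proof.
split=> [[h /= [e1 e0]] | [f1 [f0 [g1 [g0 [_ [_ [[h /= [e1 e0]] _]]]]]]]].
  exists hzero, hzero, hzero, hzero; split; [|split; [|split]].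
  - by rewrite /chain_map (hom_to0 (hcomp _ _)) (hom_to0 (hcomp _ _)).
  - by rewrite /chain_map (hom_from0 (hcomp _ _)) (hom_from0 (hcomp _ _)).
  - by exists (hsub hzero h); rewrite hcompBl hcompBr !hzero_comp !hcomp_zero -e1 -e0.
  - by exists hzero; rewrite !(hom_to0 (hsub _ _)) !(hom_to0 (hcomp _ _)).
exists (hsub hzero h); rewrite /= hcompBl hcompBr hzero_comp hcomp_zero -e1 -e0.
by rewrite (hom_from0 g1) (hom_from0 g0) !hzero_comp !hsub0K.
Qed.

Definition trivial_end_idempotents (T : cplx) : Prop :=
  ~ nullhtp (cid T) /\
  forall e : cmor T T, is_chain e -> homotopic (ccomp e e) e ->
    homotopic e (czero T T) \/ homotopic e (cid T).

Lemma indec_of_trivial_end_idempotents T : trivial_end_idempotents T -> indec la ra T.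
Proof.
case=> id_not0 idem01; split=> [/nullhtp_id_iso0 // | T1 T2].
move=> [f1 [f0 [g1 [g0 [cf [cg [gf fg]]]]]]].
pose F : cmor T (dsum T1 T2) := (f1, f0); pose G : cmor (dsum T1 T2) T := (g1, g0).
have cF : is_chain F := cf; have cG : is_chain G := cg.
have GF : homotopic (ccomp G F) (cid T) := gf.
have FG : homotopic (ccomp F G) (cid _) := fg.
have [cinl cinr cfst csnd] := is_chain_dsum T1 T2.
pose E := ccomp (dsum_inl T1 T2) (dsum_fst T1 T2).
have cE : is_chain E by apply: is_chain_comp.
pose e := ccomp G (ccomp E F).
have ce : is_chain e by do !apply: is_chain_comp.
have ee : homotopic (ccomp e e) e.
  have -> : ccomp e e = ccomp (ccomp G E) (ccomp (ccomp F G) (ccomp E F)).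
    by rewrite /e !ccompA.
  have -> : e = ccomp (ccomp G E) (ccomp (cid _) (ccomp E F)).
    rewrite cid_comp /e /E !ccompA -(ccompA _ (dsum_fst T1 T2) (dsum_inl T1 T2)).
    by rewrite dsum_fst_inl ccomp_id.
  apply: homotopic_comp (homotopic_refl _) _; first exact: is_chain_comp.
    by do !apply: is_chain_comp.
  apply: homotopic_comp (homotopic_refl _) => //; first exact: is_chain_id.
  exact: is_chain_comp.
have [e0 | e1] := idem01 e ce ee; [left | right]; apply/nullhtp_id_iso0.
  exact: nullhtp_id_of_retract cF cG cinl cfst FG (dsum_fst_inl T1 T2) e0.
apply: nullhtp_id_of_retract cF cG cinr csnd FG (dsum_snd_inr T1 T2) _.
rewrite dsum_inr_snd ccompBl ccompBr cid_comp -(csubrr (cid T)).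
exact: homotopic_sub GF e1.
Qed.

(** * Minimal generating sets *)

Hypotheses (locA : local_alg A) (locB : local_alg B).

Lemma gens_right_col' r (g : 'M[X]_(1, r.+1)) (b : 'I_r.+1 -> B) i :
  gens_right ra g -> \sum_l ra (g 0 l) (b l) = 0 -> b i \is a GRing.unit ->
  gens_right ra (col' i g).
Proof.
move=> gg gb0 Ubi x; have [c ->] := gg x.
exists (fun l => c (lift i l) - b (lift i l) * ((b i)^-1 * c i)).
move/eqP: gb0; rewrite (bigD1_ord i) //= addr_eq0 => /eqP gb.
rewrite (bigD1_ord i) //=.
have -> : ra (g 0 i) (c i) = ra (ra (g 0 i) (b i)) ((b i)^-1 * c i).
  by rewrite -raM mulrA divrr // mul1r.
rewrite gb (addmorphN (raDl _)) ra_suml.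
under [RHS]eq_bigr do rewrite mxE raDr (addmorphN (raDr _)) raM.
by rewrite big_split sumrN addrC.
Qed.

Lemma gens_left_row' l (h : 'M[X]_(l.+1, 1)) (a : 'I_l.+1 -> A) j :
  gens_left la h -> \sum_t la (a t) (h t 0) = 0 -> a j \is a GRing.unit ->
  gens_left la (row' j h).
Proof.
move=> gh ha0 Uaj x; have [c ->] := gh x.
exists (fun t => c (lift j t) - (c j * (a j)^-1) * a (lift j t)).
move/eqP: ha0; rewrite (bigD1_ord j) //= addr_eq0 => /eqP ha.
rewrite (bigD1_ord j) //=.
have -> : la (c j) (h j 0) = la (c j * (a j)^-1) (la (a j) (h j 0)).
  by rewrite -laM -mulrA mulVr // mulr1.
rewrite ha (addmorphN (laDr _)) la_sumr.
under [RHS]eq_bigr do rewrite mxE laDl (addmorphN (laDl _)) laM.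
by rewrite big_split sumrN addrC.
Qed.

Lemma is_tB_nonunit r (g : 'M[X]_(1, r)) p (c : 'M[B]_(r, p)) :
  is_tB ra r -> gens_right ra g -> mxXB ra g c = 0 ->
  forall i j, c i j \isn't a GRing.unit.
Proof.
case: r g c => [|r] g c [_ minr] gg gc0 i j; first by case: i.
apply/negP => Ucij; suff /minr : gens_right ra (col' i g) by rewrite ltnn.
apply: (@gens_right_col' _ g (fun l => c l j) i gg _ Ucij).
by move/matrixP: gc0 => /(_ 0 j); rewrite !mxE.
Qed.

Lemma is_tA_nonunit l (h : 'M[X]_(l, 1)) p (c : 'M[A]_(p, l)) :
  is_tA la l -> gens_left la h -> mxAX la c h = 0 ->
  forall i j, c i j \isn't a GRing.unit.
Proof.
case: l h c => [|l] h c [_ minl] gh ch0 i j; first by case: j.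
apply/negP => Ucij; suff /minl : gens_left la (row' j h) by rewrite ltnn.
apply: (@gens_left_row' _ h (fun t => c i t) j gh _ Ucij).
by move/matrixP: ch0 => /(_ i 0); rewrite !mxE.
Qed.

Lemma is_tB_idempotent0 r (g : 'M[X]_(1, r)) (c : 'M[B]_r) :
  is_tB ra r -> gens_right ra g -> c *m c = c -> mxXB ra g c = 0 -> c = 0.
Proof.
by move=> tB gg cc gc0; apply: nonunit_idempotent_mx0 (is_tB_nonunit tB gg gc0) cc.
Qed.

Lemma is_tA_idempotent0 l (h : 'M[X]_(l, 1)) (c : 'M[A]_l) :
  is_tA la l -> gens_left la h -> c *m c = c -> mxAX la c h = 0 -> c = 0.
Proof.
by move=> tA gh cc ch0; apply: nonunit_idempotent_mx0 (is_tA_nonunit tA gh ch0) cc.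
Qed.

(** * The complexes P_x *)

Definition homotopy_free (T : cplx) :=
  forall h : hom (m1 T) (m2 T) (n1 T) (n2 T), h = hzero.

Lemma homotopy_free_homotopic T (F G : cmor T T) :
  homotopy_free T -> homotopic F G -> F = G.
Proof.
move=> hfT [h]; rewrite (hfT h) hzero_comp hcomp_zero.
by case: F G => [f1 f0] [g1 g0] /= [/hsub_eq0 -> /hsub_eq0 ->].
Qed.

Lemma trivial_end_idempotents_of_homotopy_free T :
  homotopy_free T -> cid T <> czero T T ->
  (forall e : cmor T T, is_chain e -> ccomp e e = e -> e = czero T T \/ e = cid T) ->
  trivial_end_idempotents T.
Proof.
move=> hfT id_neq0 idem01; split=> [|e ce /(homotopy_free_homotopic hfT) ee].
  by rewrite -(csubr0 (cid T)) => /(homotopy_free_homotopic hfT).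
by case: (idem01 e ce ee) => ->; [left | right]; apply: homotopic_refl.
Qed.

Lemma homotopy_free_Px s t (x : 'M[X]_(s, t)) : homotopy_free (Px A B x).
Proof.
by move=> h; apply: hom_eq; [apply: flatmx_eq | apply: flatmx_eq | apply: thinmx_eq].
Qed.

Lemma trivial_end_Px s t (x : 'M[X]_(s, t)) : (0 < s + t)%N ->
  (forall (a : 'M[A]_s) (b : 'M[B]_t), a *m a = a -> b *m b = b ->
     mxXB ra x b = mxAX la a x -> a = 0 /\ b = 0 \/ a = 1%:M /\ b = 1%:M) ->
  trivial_end_idempotents (Px A B x).
Proof.
move=> st_gt0 idem01.
apply: (trivial_end_idempotents_of_homotopy_free (@homotopy_free_Px _ _ x)).
  (* the components of [cid = czero] are identity matrices of sizes 0, t, s and 0 *)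
  move=> [] _ /scalar1_mx_eq0 /= t0 /scalar1_mx_eq0 /= s0 _.
  by move: st_gt0; rewrite s0 t0.
move=> [[eA1 eX1 eB1] [eA0 eX0 eB0]] /(congr1 (@hX _ _ _ _ _ _ _ _)) /=.
rewrite mx0AX mxXB0 add0r addr0 => ce [] _ _ eBB [] eAA _ _.
have [[-> ->] | [-> ->]] := idem01 _ _ eAA eBB ce; [left | right].
  by congr pair; apply: hom_eq => //=; apply: flatmx_eq || apply: thinmx_eq.
by congr pair; apply: hom_eq => //=; apply: flatmx_eq || apply: thinmx_eq.
Qed.

Lemma iso_sym T U : iso la ra T U -> iso la ra U T.
Proof. by move=> [f1 [f0 [g1 [g0 [cf [cg [gf fg]]]]]]]; exists g1, g0, f1, f0. Qed.

Lemma iso_m1_eq0 T U : iso la ra T U -> n1 T = 0%N -> m1 U = 0%N -> m1 T = 0%N.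
Proof.
move=> [f1 [f0 [g1 [g0 [_ [_ [[h [_ e0]] _]]]]]]] Tn1 Um1.
exact: id_factor_through0 Um1 Tn1 (congr1 (@hA _ _ _ _ _ _ _ _) e0).
Qed.

Lemma iso_n2_eq0 T U : iso la ra T U -> m2 T = 0%N -> n2 U = 0%N -> n2 T = 0%N.
Proof.
move=> [f1 [f0 [g1 [g0 [_ [_ [[h [e1 _]] _]]]]]]] Tm2 Un2.
exact: id_factor_through0 Un2 Tm2 (congr1 (@hB _ _ _ _ _ _ _ _) e1).
Qed.

Lemma not_iso_of_m1 T U : n1 T = 0%N -> m1 U = 0%N -> (0 < m1 T)%N ->
  ~ iso la ra T U /\ ~ iso la ra U T.
Proof.
move=> Tn1 Um1; rewrite lt0n => /eqP Tm1.
by split=> [/iso_m1_eq0 | /iso_sym /iso_m1_eq0]; move/(_ Tn1 Um1).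
Qed.

Lemma not_iso_of_n2 T U : m2 T = 0%N -> n2 U = 0%N -> (0 < n2 T)%N ->
  ~ iso la ra T U /\ ~ iso la ra U T.
Proof.
move=> Tm2 Un2; rewrite lt0n => /eqP Tn2.
by split=> [/iso_n2_eq0 | /iso_sym /iso_n2_eq0]; move/(_ Tm2 Un2).
Qed.

Definition right_gen m n (D : 'M[X]_(m, n)) :=
  forall p (Y : 'M[X]_(m, p)), exists b, Y = mxXB ra D b.
Definition left_gen m n (D : 'M[X]_(m, n)) :=
  forall p (Y : 'M[X]_(p, n)), exists a, Y = mxAX la a D.

Lemma right_gen_of_gens r (g : 'M[X]_(1, r)) : gens_right ra g -> right_gen g.
Proof.
move=> gg p Y; have [c Hc] := fin_all_exists (fun j => gg (Y 0 j)).
exists (\matrix_(i, j) c j i); apply/matrixP => i j; rewrite ord1 mxE Hc.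
by apply: eq_bigr => l _; rewrite mxE.
Qed.
Lemma left_gen_of_gens l (h : 'M[X]_(l, 1)) : gens_left la h -> left_gen h.
Proof.
move=> gh p Y; have [c Hc] := fin_all_exists (fun i => gh (Y i 0)).
exists (\matrix_(i, j) c i j); apply/matrixP => i j; rewrite ord1 mxE Hc.
by apply: eq_bigr => t _; rewrite mxE.
Qed.

Lemma right_gen_flat n (D : 'M[X]_(0, n)) : right_gen D.
Proof. by move=> p Y; exists 0; apply: flatmx_eq. Qed.
Lemma left_gen_thin m (D : 'M[X]_(m, 0)) : left_gen D.
Proof. by move=> p Y; exists 0; apply: thinmx_eq. Qed.

Lemma right_gen_block m1 n1 m2 n2 (D1 : 'M[X]_(m1, n1)) (D2 : 'M[X]_(m2, n2)) :
  right_gen D1 -> right_gen D2 -> right_gen (block_mx D1 0 0 D2).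
Proof.
move=> gD1 gD2 p Y; rewrite -[Y]vsubmxK.
have [[b1 ->] [b2 ->]] := (gD1 _ (usubmx Y), gD2 _ (dsubmx Y)).
by exists (col_mx b1 b2); rewrite mxXB_block_col !mx0XB addr0 add0r.
Qed.
Lemma left_gen_block m1 n1 m2 n2 (D1 : 'M[X]_(m1, n1)) (D2 : 'M[X]_(m2, n2)) :
  left_gen D1 -> left_gen D2 -> left_gen (block_mx D1 0 0 D2).
Proof.
move=> gD1 gD2 p Y; rewrite -[Y]hsubmxK.
have [[a1 ->] [a2 ->]] := (gD1 _ (lsubmx Y), gD2 _ (rsubmx Y)).
by exists (row_mx a1 a2); rewrite mxAX_row_block !mxAX0 addr0 add0r.
Qed.

Lemma presilting_of_span T : n1 T = 0%N -> m2 T = 0%N ->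
  (forall Y : 'M[X]_(m1 T, n2 T),
     exists a b, Y = mxAX la a (hX (dif T)) + mxXB ra (hX (dif T)) b) ->
  presilting la ra T.
Proof.
case: T => n1' n2' m1' m2' d /= Tn1 Tm2; subst n1' m2' => span phi.
have [a [b eY]] := span (hX phi).
exists (Defs.Hom a 0 0), (Defs.Hom 0 0 b).
apply: hom_eq; rewrite /= ?eY ?mx0XB ?mxAX0 ?addr0 ?add0r //.
  exact: thinmx_eq.
exact: flatmx_eq.
Qed.

Lemma presilting_of_right_gen T : n1 T = 0%N -> m2 T = 0%N ->
  right_gen (hX (dif T)) -> presilting la ra T.
Proof.
move=> Tn1 Tm2 gD; apply: presilting_of_span => // Y; have [b ->] := gD _ Y.
by exists 0, b; rewrite mx0AX add0r.
Qed.
Lemma presilting_of_left_gen T : n1 T = 0%N -> m2 T = 0%N ->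
  left_gen (hX (dif T)) -> presilting la ra T.
Proof.
move=> Tn1 Tm2 gD; apply: presilting_of_span => // Y; have [a ->] := gD _ Y.
by exists a, 0; rewrite mxXB0 addr0.
Qed.

Lemma silt_geq_of_m0 T U : m1 U = 0%N -> m2 U = 0%N -> silt_geq la ra T U.
Proof.
case: U => n1' n2' m1' m2' d /= Um1 Um2; subst m1' m2' => phi.
by exists hzero, hzero; apply: hom_eq; apply: flatmx_eq.
Qed.
Lemma silt_geq_of_n0 T U : n1 T = 0%N -> n2 T = 0%N -> silt_geq la ra T U.
Proof.
case: T => n1' n2' m1' m2' d /= Tn1 Tn2; subst n1' n2' => phi.
by exists hzero, hzero; apply: hom_eq; apply: thinmx_eq.
Qed.

Lemma gvec_Px (R : realType) s t (x : 'M[X]_(s, t)) : gvec R (Px A B x) = (s%:R, - t%:R).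
Proof. by rewrite /gvec /= subr0 sub0r. Qed.

Lemma gfan_contains_pair (R : realType) T1 T2 (v1 v2 : R * R) :
  gvec R T1 = v1 -> gvec R T2 = v2 ->
  indec la ra T1 -> indec la ra T2 -> ~ iso la ra T1 T2 -> ~ iso la ra T2 T1 ->
  presilting la ra (big_dsum [:: T1; T2]) ->
  gfan_contains la ra (cone [:: v1; v2]).
Proof.
move=> <- <- iT1 iT2 n12 n21 pre; exists [:: T1; T2]; split; [|split; [|split]] => //.
- by case=> -[|[|]].
- by case=> -[|[|i]] Hi; case=> -[|[|j]] Hj.
Qed.

Lemma indec_P1 : indec la ra (P1c A B X).
Proof.
change (indec la ra (Px A B (0 : 'M_(1, 0)))).
apply/indec_of_trivial_end_idempotents/trivial_end_Px => //.
move=> a b aa _ _; rewrite [b]flatmx0 [1%:M : 'M_0]flatmx0.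
by have [] := idempotent_mx1 locA aa; [left | right].
Qed.

Lemma indec_P2sh : indec la ra (P2sh A B X).
Proof.
change (indec la ra (Px A B (0 : 'M_(0, 1)))).
apply/indec_of_trivial_end_idempotents/trivial_end_Px => //.
move=> a b _ bb _; rewrite [a]flatmx0 [1%:M : 'M_0]flatmx0.
by have [] := idempotent_mx1 locB bb; [left | right].
Qed.

Lemma indec_Pg r (g : 'M[X]_(1, r)) : is_tB ra r -> gens_right ra g -> indec la ra (Px A B g).
Proof.
move=> tB gg; apply/indec_of_trivial_end_idempotents/trivial_end_Px => //.
move=> a b aa bb; have [-> | ->] := idempotent_mx1 locA aa; rewrite ?mx0AX ?mx1AX => gb.
  by left; split=> //; apply: is_tB_idempotent0 tB gg bb gb.
right; split=> //; apply/eqP; rewrite eq_sym -subr_eq0; apply/eqP.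
apply: is_tB_idempotent0 tB gg (idempotent_1sub bb) _.
by rewrite (addmorphB (mxXBDr _)) mxXB1 gb subrr.
Qed.

Lemma indec_Ph l (h : 'M[X]_(l, 1)) : is_tA la l -> gens_left la h -> indec la ra (Px A B h).
Proof.
move=> tA gh; apply/indec_of_trivial_end_idempotents/trivial_end_Px; first by rewrite addn1.
move=> a b aa bb; have [-> | ->] := idempotent_mx1 locB bb; rewrite ?mxXB0 ?mxXB1 => ha.
  by left; split=> //; apply: is_tA_idempotent0 tA gh aa (esym ha).
right; split=> //; apply/eqP; rewrite eq_sym -subr_eq0; apply/eqP.
apply: is_tA_idempotent0 tA gh (idempotent_1sub aa) _.
by rewrite (addmorphB (mxAXDl _)) mx1AX -ha subrr.
Qed.

Lemma gfan_cone_P2sh_Pg (R : realType) r : is_tB ra r ->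
  gfan_contains la ra (cone [:: (0 : R, -1); (1, - r%:R)]).
Proof.
move=> tB; have [[g gg] _] := tB.
have [nPgP2 nP2Pg] := @not_iso_of_m1 (Px A B g) (P2sh A B X) erefl erefl isT.
apply: (gfan_contains_pair (gvec_Px R (0 : 'M_(0, 1))) (gvec_Px R g)) => //.
- exact: indec_P2sh.
- exact: indec_Pg.
apply: presilting_of_right_gen => //=.
apply: right_gen_block; first exact: right_gen_flat.
by apply: right_gen_block; [exact: right_gen_of_gens | exact: right_gen_flat].
Qed.

Lemma gfan_cone_P1_Ph (R : realType) l : is_tA la l ->
  gfan_contains la ra (cone [:: (1 : R, 0); (l%:R, -1)]).
Proof.
move=> tA; have [[h gh] _] := tA.
have [nPhP1 nP1Ph] := @not_iso_of_n2 (Px A B h) (P1c A B X) erefl erefl isT.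
have gP1 : gvec R (P1c A B X) = (1, 0) by rewrite /gvec /= subrr subr0.
apply: (gfan_contains_pair gP1 (gvec_Px R h)) => //.
- exact: indec_P1.
- exact: indec_Ph.
apply: presilting_of_left_gen => //=.
apply: left_gen_block; first exact: left_gen_thin.
by apply: left_gen_block; [exact: left_gen_of_gens | exact: left_gen_thin].
Qed.

Lemma mu_plus_P1sh r (g : 'M[X]_(1, r)) : is_tB ra r -> gens_right ra g ->
  mu_plus la ra 1 (P1sh A B X) (P2sh A B X) (Px A B g) (P2sh A B X).
Proof.
move=> tB gg; split; [split; [split|] | split].
- exact: indec_Pg.
- exact: indec_P2sh.
- by have [] := @not_iso_of_m1 (Px A B g) (P2sh A B X) erefl erefl isT.
- apply: presilting_of_right_gen => //=.
  by apply: right_gen_block; [exact: right_gen_of_gens | exact: right_gen_flat].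
- by have [] := @not_iso_of_m1 (Px A B g) (P1sh A B X) erefl erefl isT.
- exact: silt_geq_of_m0.
by have [] := @not_iso_of_m1 (dsum (Px A B g) (P2sh A B X))
  (dsum (P1sh A B X) (P2sh A B X)) erefl erefl isT.
Qed.

Lemma mu_minus_P2 l (h : 'M[X]_(l, 1)) : is_tA la l -> gens_left la h ->
  mu_minus la ra 2 (P1c A B X) (P2c A B X) (P1c A B X) (Px A B h).
Proof.
move=> tA gh; split; [split; [split|] | split].
- exact: indec_P1.
- exact: indec_Ph.
- by have [] := @not_iso_of_n2 (Px A B h) (P1c A B X) erefl erefl isT.
- apply: presilting_of_left_gen => //=.
  by apply: left_gen_block; [exact: left_gen_thin | exact: left_gen_of_gens].
- by have [] := @not_iso_of_n2 (Px A B h) (P2c A B X) erefl erefl isT.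
- exact: silt_geq_of_n0.
by have [] := @not_iso_of_n2 (dsum (P1c A B X) (Px A B h))
  (dsum (P1c A B X) (P2c A B X)) erefl erefl isT.
Qed.

End TwoTermComplexes.

Unset Implicit Arguments.

Theorem proposition3p10 (R : realType) (k : fieldType) (A B : falgType k)
  (X : vectType k) (la : A -> X -> X) (ra : X -> B -> X) :
  local_alg A -> local_alg B -> bimodule la ra ->
  (* (a) *)
  (forall r : nat, is_tB ra r ->
     gfan_contains la ra (cone [:: (0 : R, -1); (1, - r%:R)])) /\
  (* (b) *)
  (forall l : nat, is_tA la l ->
     gfan_contains la ra (cone [:: (1 : R, 0); (l%:R, -1)])) /\
  (* (c) *)
  (forall (r : nat) (g : 'M[X]_(1, r)), is_tB ra r -> gens_right ra g ->
     mu_plus la ra 1 (P1sh A B X) (P2sh A B X) (Px A B g) (P2sh A B X)) /\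
  (* (d) *)
  (forall (l : nat) (h : 'M[X]_(l, 1)), is_tA la l -> gens_left la h ->
     mu_minus la ra 2 (P1c A B X) (P2c A B X) (P1c A B X) (Px A B h)).
Proof.
move=> locA locB bimodX; split; [|split; [|split]].
- exact: gfan_cone_P2sh_Pg.
- exact: gfan_cone_P1_Ph.
- exact: mu_plus_P1sh.
- exact: mu_minus_P2.
Qed.
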